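(* Mumbling $H_\mu$ with unique mumbling and basis $\mathit{LTL}$ is at least as expressive as stuttering $H_\mu$ with unique stuttering and basis $\mathit{LTL}$; and mumbling $H_\mu$ with unique mumbling and full basis is at least as expressive as stuttering $H_\mu$ with unique stuttering and full basis.
   Context: Fix a finite set $\mathit{AP}$. A trace is an infinite sequence $P_0m_0P_1m_1\dots$ with $P_i\subseteq\mathit{AP}$, $m_i\in\{\mathit{int},\mathit{call},\mathit{ret}\}$; $\mathit{tr}(i)=P_i$. Successor functions: $\mathit{succ}_\mathsf{g}(\mathit{tr},i)=i+1$; $\mathit{succ}_\mathsf{a}(\mathit{tr},i)=i+1$ if $m_i=\mathit{int}$, and if $m_i=\mathit{call}$ the least $j>i$ such that among $m_i,\dots,m_{j-1}$ the numbers of $\mathit{call}$ and $\mathit{ret}$ coincide (undefined if none), undefined if $m_i=\mathit{ret}$; $\mathit{succ}_\mathsf{c}(\mathit{tr},i)$ the largest $j<i$ with $m_j=\mathit{call}$ such that among $m_{j+1},\dots,m_{i-1}$ the numbers of $\mathit{call}$ and $\mathit{ret}$ coincide (undefined if none). Mumbling $H_\mu$: trace formulae $\delta ::= \mathit{ap}\mid Y\mid\delta\lor\delta\mid\lnot\delta\mid\bigcirc^\mathsf{f}\delta\mid\mu Y.\delta$ ($\mathsf{f}\in\{\mathsf{g},\mathsf{a},\mathsf{c}\}$); multitrace formulae $\psi ::= [\delta]_\pi\mid X\mid\psi\lor\psi\mid\lnot\psi\mid\bigcirc^\Delta\psi\mid\mu X.\psi$ with $\Delta$ mapping trace variables to trace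 formulae; hyperproperty formulae $\varphi ::= \exists\pi.\varphi\mid\forall\pi.\varphi\mid\psi$; fixpoint variables occur positively; closed = all variables bound. Trace semantics $\llbracket\delta\rrbracket^{\mathit{tr}}_{\mathcal{V}}\subseteq\mathbb{N}_0$: $\mathit{ap}\mapsto\{i\mid\mathit{ap}\in\mathit{tr}(i)\}$, $Y\mapsto\mathcal{V}(Y)$, union, complement, $\bigcirc^\mathsf{f}\delta\mapsto\{i\mid\mathit{succ}_\mathsf{f}(\mathit{tr},i)$ defined and in $\llbracket\delta\rrbracket\}$, $\mu Y.\delta\mapsto\bigcap\{I\mid\llbracket\delta\rrbracket_{\mathcal{V}[Y\mapsto I]}\subseteq I\}$. $\mathit{succ}_\delta(\mathit{tr},i)=\min\{j>i\mid j\in\llbracket\delta\rrbracket^{\mathit{tr}}\}$ if nonempty, else $i+1$; $\mathit{succ}_\Delta(\Pi,v)$ componentwise for a trace assignment $\Pi$ on $\pi_1,\dots,\pi_n$. $\llbracket\psi\rrbracket^\Pi_{\mathcal{W}}\subseteq\mathbb{N}_0^n$: $[\delta]_{\pi_j}\mapsto\{v\mid v_j\in\llbracket\delta\rrbracket^{\Pi(\pi_j)}\}$, $X\mapsto\mathcal{W}(X)$, Boolean as usual, $\bigcirc^\Delta\psi\mapsto\{v\mid\mathit{succ}_\Delta(\Pi,v)\in\llbracket\psi\rrbracket\}$, $\mu X$ least fixpoint. $\Pi\models_\mathcal{T}\exists\pi.\varphi$ iff some $\mathit{tr}\in\mathcal{T}$ gives $\Pi[\pi\mapsto\mathit{tr}]\models_\mathcal{T}\varphi$;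 $\forall$ for all; $\Pi\models_\mathcal{T}\psi$ iff $(0,\dots,0)\in\llbracket\psi\rrbracket^\Pi$. For closed $\varphi$ and a set of traces $\mathcal{T}$, $\mathcal{T}\models\varphi$ iff the empty assignment satisfies $\varphi$ over $\mathcal{T}$. Stuttering $H_\mu$ is identical except that multitrace next operators are $\bigcirc^\Gamma\psi$ with $\Gamma$ mapping each trace variable to a finite set of trace formulae; for a finite set $\gamma$, $\mathit{succ}_\gamma(\mathit{tr},i)=\min\{j>i\mid$ for some $\delta\in\gamma$: $i\in\llbracket\delta\rrbracket^{\mathit{tr}}\not\Leftrightarrow j\in\llbracket\delta\rrbracket^{\mathit{tr}}\}$ if nonempty, else $i+1$; $\mathit{succ}_\Gamma$ componentwise and $\llbracket\bigcirc^\Gamma\psi\rrbracket=\{v\mid\mathit{succ}_\Gamma(\Pi,v)\in\llbracket\psi\rrbracket\}$. Fragments: unique mumbling (resp. unique stuttering) means all multitrace next operators of the formula use the same $\Delta$ (resp. $\Gamma$). The base formulae of $\varphi$ are the trace formulae occurring in tests $[\delta]_\pi$ or as values $\Delta(\pi)$ (resp. as elements of sets $\Gamma(\pi)$); the formula has basis $\mathcal{B}$ if all its base formulae lie in $\mathcal{B}$; full basis means no restriction. Basis $\mathit{LTL}$ is the set of LTL formulae: trace formulae built from atomic propositions using $\lnot$, $\lor$, $\bigcirc^\mathsf{g}$ and $\delta_1\,\mathcal{U}\,\delta_2:=\mu Y.(\delta_2\lor(\delta_1\land\bigcirc^\mathsf{g}Y))$ as the only fixpoint construct. Logic $L_1$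 is at least as expressive as logic $L_2$ if for every closed hyperproperty formula $\varphi$ of $L_2$ there is a closed hyperproperty formula $\varphi'$ of $L_1$ such that for all sets of traces $\mathcal{T}$, $\mathcal{T}\models\varphi$ iff $\mathcal{T}\models\varphi'$. *)

From mathcomp Require Import all_boot.
Set Implicit Arguments. Unset Strict Implicit. Unset Printing Implicit Defensive.

Fixpoint lIn (A : Type) (x : A) (l : seq A) : Prop :=
  match l with [::] => False | y :: l' => y = x \/ lIn x l' end.

Definition upd (T : Type) (V : nat -> T) (Y : nat) (x : T) : nat -> T :=
  fun Z => if Z == Y then x else V Z.

Inductive mode := MInt | MCall | MRet.

Definition isCall (m : mode) : bool := if m is MCall then true else false.
Definition isRet (m : mode) : bool := if m is MRet then true else false.

(* trace P_0 m_0 P_1 m_1 ... ; tr(i) = P_i *)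
Record trace (AP : finType) := Trace { tr_ap : nat -> {set AP}; tr_m : nat -> mode }.

Section Traces.
Variable AP : finType.
Implicit Types tr : trace AP.

Definition ncall tr i j := count (fun k => isCall (tr_m tr k)) (iota i (j - i)).
Definition nret tr i j := count (fun k => isRet (tr_m tr k)) (iota i (j - i)).
Definition balanced tr i j : Prop := ncall tr i j = nret tr i j.

(* successor functions, as (functional) relations: succ tr i j <-> succ(tr,i) = j *)
Definition succ_g tr (i j : nat) : Prop := j = i.+1.

Definition succ_a tr (i j : nat) : Prop :=
  (tr_m tr i = MInt /\ j = i.+1) \/
  (tr_m tr i = MCall /\ i < j /\ balanced tr i j /\
     forall k, i < k -> k < j -> ~ balanced tr i k).

Definition succ_c tr (i j : nat) : Prop :=
  j < i /\ tr_m tr j = MCall /\ balanced tr j.+1 i /\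
  forall k, j < k -> k < i -> ~ (tr_m tr k = MCall /\ balanced tr k.+1 i).

Definition dtr : trace AP := Trace (fun _ => set0) (fun _ => MInt).
End Traces.

Inductive dir := Dg | Da | Dc.

Inductive tform (AP : Type) :=
| TAp of AP
| TVar of nat
| TOr of tform AP & tform AP
| TNot of tform AP
| TNext of dir & tform AP
| TMu of nat & tform AP.

Section TraceFormulae.
Variable AP : finType.
Implicit Types (tr : trace AP) (d : tform AP).

Definition succ_f (f : dir) tr (i j : nat) : Prop :=
  match f with Dg => succ_g tr i j | Da => succ_a tr i j | Dc => succ_c tr i j end.

Fixpoint tsem tr (V : nat -> nat -> Prop) d : nat -> Prop :=
  match d with
  | TAp a => fun i => a \in tr_ap tr i
  | TVar Y => V Y
  | TOr d1 d2 => fun i => tsem tr V d1 i \/ tsem tr V d2 i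
  | TNot d1 => fun i => ~ tsem tr V d1 i
  | TNext f d1 => fun i => exists j, succ_f f tr i j /\ tsem tr V d1 j
  | TMu Y d1 => fun i => forall I : nat -> Prop,
                   (forall k, tsem tr (upd V Y I) d1 k -> I k) -> I i
  end.

Definition V0 : nat -> nat -> Prop := fun _ _ => False.

Fixpoint tfree (Y : nat) d : Prop :=
  match d with
  | TAp _ => False
  | TVar Z => Z = Y
  | TOr d1 d2 => tfree Y d1 \/ tfree Y d2
  | TNot d1 => tfree Y d1
  | TNext _ d1 => tfree Y d1
  | TMu Z d1 => Z <> Y /\ tfree Y d1
  end.

Fixpoint tpol (p : bool) (Y : nat) d : Prop :=
  match d with
  | TAp _ => True
  | TVar Z => Z = Y -> p = true
  | TOr d1 d2 => tpol p Y d1 /\ tpol p Y d2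
  | TNot d1 => tpol (~~ p) Y d1
  | TNext _ d1 => tpol p Y d1
  | TMu Z d1 => Z = Y \/ tpol p Y d1
  end.

Fixpoint tpos d : Prop :=
  match d with
  | TAp _ | TVar _ => True
  | TOr d1 d2 => tpos d1 /\ tpos d2
  | TNot d1 => tpos d1
  | TNext _ d1 => tpos d1
  | TMu Y d1 => tpol true Y d1 /\ tpos d1
  end.

Definition tclosed d : Prop := forall Y, ~ tfree Y d.
Definition twf d : Prop := tclosed d /\ tpos d.

Definition TAnd d1 d2 : tform AP := TNot (TOr (TNot d1) (TNot d2)).
Definition TUntil (Y : nat) d1 d2 : tform AP :=
  TMu Y (TOr d2 (TAnd d1 (TNext Dg (TVar AP Y)))).

Inductive isLTL : tform AP -> Prop :=
| LTL_ap a : isLTL (TAp a)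
| LTL_or d1 d2 : isLTL d1 -> isLTL d2 -> isLTL (TOr d1 d2)
| LTL_not d1 : isLTL d1 -> isLTL (TNot d1)
| LTL_next d1 : isLTL d1 -> isLTL (TNext Dg d1)
| LTL_until Y d1 d2 : isLTL d1 -> isLTL d2 -> ~ tfree Y d1 -> ~ tfree Y d2 ->
    isLTL (TUntil Y d1 d2).
End TraceFormulae.

(* Multitrace formulae, parametric in the label L of next operators     *)
(*   mumbling:   L = seq (tform AP)          (Delta, indexed by pi_j)   *)
(*   stuttering: L = seq (seq (tform AP))    (Gamma, finite sets as lists) *)
(* Trace variables pi_0, pi_1, ... are numbered by the quantifier that  *)
(* binds them (0 = outermost).                                          *)
Inductive mform (AP L : Type) :=
| MTest of tform AP & nat
| MVar of nat
| MOr of mform AP L & mform AP L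
| MNot of mform AP L
| MNext of L & mform AP L
| MMu of nat & mform AP L.

Inductive hform (AP L : Type) :=
| HEx of hform AP L
| HAll of hform AP L
| HBody of mform AP L.

Definition mlabel (AP : Type) := seq (tform AP).
Definition slabel (AP : Type) := seq (seq (tform AP)).

Section Multi.
Variable AP : finType.
Variable L : Type.
Implicit Types (psi : mform AP L) (phi : hform AP L).

Definition vec := nat -> nat.

Definition succ_min (S : nat -> Prop) (i j : nat) : Prop :=
  (i < j /\ S j /\ forall k, i < k -> k < j -> ~ S k) \/
  ((forall k, i < k -> ~ S k) /\ j = i.+1).

Variable step : L -> nat -> trace AP -> nat -> nat -> Prop.

Fixpoint msem (Pi : seq (trace AP)) (W : nat -> vec -> Prop) psi : vec -> Prop :=
  match psi with
  | MTest d j => fun v => tsem (nth (dtr AP) Pi j) (V0 : nat -> nat -> Prop) d (v j)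
  | MVar X => W X
  | MOr p1 p2 => fun v => msem Pi W p1 v \/ msem Pi W p2 v
  | MNot p1 => fun v => ~ msem Pi W p1 v
  | MNext l p1 => fun v => exists w : vec,
        (forall j, step l j (nth (dtr AP) Pi j) (v j) (w j)) /\ msem Pi W p1 w
  | MMu X p1 => fun v => forall I : vec -> Prop,
        (forall u, msem Pi (upd W X I) p1 u -> I u) -> I v
  end.

Definition W0 : nat -> vec -> Prop := fun _ _ => False.

Fixpoint hsat (T : trace AP -> Prop) (Pi : seq (trace AP)) phi : Prop :=
  match phi with
  | HEx p => exists tr, T tr /\ hsat T (rcons Pi tr) p
  | HAll p => forall tr, T tr -> hsat T (rcons Pi tr) p
  | HBody psi => msem Pi W0 psi (fun _ => 0)
  end.

Definition models (T : trace AP -> Prop) phi : Prop := hsat T [::] phi.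

Fixpoint mfree (X : nat) psi : Prop :=
  match psi with
  | MTest _ _ => False
  | MVar Z => Z = X
  | MOr p1 p2 => mfree X p1 \/ mfree X p2
  | MNot p1 => mfree X p1
  | MNext _ p1 => mfree X p1
  | MMu Z p1 => Z <> X /\ mfree X p1
  end.

Fixpoint mpol (p : bool) (X : nat) psi : Prop :=
  match psi with
  | MTest _ _ => True
  | MVar Z => Z = X -> p = true
  | MOr p1 p2 => mpol p X p1 /\ mpol p X p2
  | MNot p1 => mpol (~~ p) X p1
  | MNext _ p1 => mpol p X p1
  | MMu Z p1 => Z = X \/ mpol p X p1
  end.

Variable lwf : nat -> L -> Prop.
Fixpoint mwf (k : nat) psi : Prop :=
  match psi with
  | MTest d j => j < k /\ twf d
  | MVar _ => True
  | MOr p1 p2 => mwf k p1 /\ mwf k p2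
  | MNot p1 => mwf k p1
  | MNext l p1 => lwf k l /\ mwf k p1
  | MMu X p1 => mpol true X p1 /\ mwf k p1
  end.

Fixpoint hwf (k : nat) phi : Prop :=
  match phi with
  | HEx p | HAll p => hwf k.+1 p
  | HBody psi => mwf k psi /\ forall X, ~ mfree X psi
  end.

Fixpoint mlabels psi : seq L :=
  match psi with
  | MTest _ _ | MVar _ => [::]
  | MOr p1 p2 => mlabels p1 ++ mlabels p2
  | MNot p1 | MMu _ p1 => mlabels p1
  | MNext l p1 => l :: mlabels p1
  end.

Fixpoint hbody phi : mform AP L :=
  match phi with HEx p | HAll p => hbody p | HBody psi => psi end.

Variable lbasis : (tform AP -> Prop) -> L -> Prop.
Fixpoint mbasis (B : tform AP -> Prop) psi : Prop :=
  match psi with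
  | MTest d _ => B d
  | MVar _ => True
  | MOr p1 p2 => mbasis B p1 /\ mbasis B p2
  | MNot p1 | MMu _ p1 => mbasis B p1
  | MNext l p1 => lbasis B l /\ mbasis B p1
  end.
End Multi.

Section Instances.
Variable AP : finType.

Definition mstep (D : mlabel AP) (j : nat) (tr : trace AP) (i i' : nat) : Prop :=
  succ_min (tsem tr V0 (nth (TVar AP 0) D j)) i i'.

Definition sstep (G : slabel AP) (j : nat) (tr : trace AP) (i i' : nat) : Prop :=
  succ_min (fun k => exists d, lIn d (nth [::] G j) /\
                      ~ (tsem tr V0 d i <-> tsem tr V0 d k)) i i'.

Definition mlwf (k : nat) (D : mlabel AP) : Prop :=
  size D = k /\ forall d, lIn d D -> twf d.
Definition slwf (k : nat) (G : slabel AP) : Prop :=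
  size G = k /\ forall g d, lIn g G -> lIn d g -> twf d.

Definition mlbasis (B : tform AP -> Prop) (D : mlabel AP) : Prop :=
  forall d, lIn d D -> B d.
Definition slbasis (B : tform AP -> Prop) (G : slabel AP) : Prop :=
  forall g d, lIn g G -> lIn d g -> B d.

Definition unique_mumbling (phi : hform AP (mlabel AP)) : Prop :=
  forall D1 D2, lIn D1 (mlabels (hbody phi)) -> lIn D2 (mlabels (hbody phi)) -> D1 = D2.

(* Gamma maps trace variables to finite SETS: compare componentwise as sets *)
Definition unique_stuttering (phi : hform AP (slabel AP)) : Prop :=
  forall G1 G2, lIn G1 (mlabels (hbody phi)) -> lIn G2 (mlabels (hbody phi)) ->
    size G1 = size G2 /\
    forall j d, lIn d (nth [::] G1 j) <-> lIn d (nth [::] G2 j).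

Definition mumbling_unique_formula (B : tform AP -> Prop)
    (phi : hform AP (mlabel AP)) : Prop :=
  hwf mlwf 0 phi /\ unique_mumbling phi /\ mbasis mlbasis B (hbody phi).

Definition stuttering_unique_formula (B : tform AP -> Prop)
    (phi : hform AP (slabel AP)) : Prop :=
  hwf slwf 0 phi /\ unique_stuttering phi /\ mbasis slbasis B (hbody phi).

Definition mmodels (T : trace AP -> Prop) (phi : hform AP (mlabel AP)) : Prop :=
  models mstep T phi.
Definition smodels (T : trace AP -> Prop) (phi : hform AP (slabel AP)) : Prop :=
  models sstep T phi.

Definition mumb_at_least_stut (B1 B2 : tform AP -> Prop) : Prop :=
  forall phi : hform AP (slabel AP), stuttering_unique_formula B2 phi ->
    exists phi' : hform AP (mlabel AP), mumbling_unique_formula B1 phi' /\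
      forall T : trace AP -> Prop, smodels T phi <-> mmodels T phi'.
End Instances.

From mathcomp Require Import all_boot zify.
From Stdlib Require Import Classical IndefiniteDescription FunctionalExtensionality.
Set Implicit Arguments. Unset Strict Implicit. Unset Printing Implicit Defensive.

(* Fix the unique stuttering label Γ. For the trace bound to π_j, let D_j hold
   at i when some formula of Γ(π_j) changes value between i and i+1, and let the
   mumbling label be Δ(π_j) := D_j. A stuttering step from i leads to (the first
   D_j-position >= i) + 1, a mumbling step from i to the first D_j-position > i.
   So after the first stuttering step a mumbling position w stands for the
   stuttering position w+1 if D_j holds at 0 or nowhere, and for (the mumbling
   successor of w) + 1 otherwise, and simultaneous steps preserve this
   correspondence. The translation skips the first next operator, evaluates the
   tests below it at the corresponding stuttering position by an LTL look-ahead,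
   and decides which of the two correspondences applies by a test at the origin
   for every trace. Least fixpoints transfer along the correspondence since it
   is functional and total. Everything added is LTL over the base formulae and a
   false formula; if AP is empty there is no LTL formula, and every stuttering
   formula with LTL basis is constant. *)

Lemma lIn_cat (A : Type) (x : A) s t : lIn x (s ++ t) <-> lIn x s \/ lIn x t.
Proof. by elim: s => [|y s IH] /=; tauto. Qed.

Lemma lIn_nth (A : Type) (s : seq A) x0 j : j < size s -> lIn (nth x0 s j) s.
Proof. by elim: s j => [|x s IH] [|j] //= Hj; [left|right; apply: IH]. Qed.

Lemma lIn_map (A B : Type) (f : A -> B) s y :
  lIn y (map f s) -> exists x, lIn x s /\ y = f x.
Proof.
elim: s => [|x s IH] //= [<-|/IH [x' [Hx' ->]]]; first by exists x; split; first left.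
by exists x'; split; first right.
Qed.

Lemma lIn_nseq (A : Type) (x y : A) n : lIn y (nseq n x) -> y = x.
Proof. by elim: n => [|n IH] //= [<-|/IH]. Qed.

Lemma ex_least (P : nat -> Prop) :
  (exists n, P n) -> exists n, P n /\ forall m, m < n -> ~ P m.
Proof.
case=> n; elim: n {-2}n (leqnn n) => [|n IH] m Hm Pm.
  by exists m; split => // k Hk; lia.
case: (classic (exists k, k < m /\ P k)) => [[k [Hk Pk]]|Hn].
  by apply: (IH k) => //; lia.
by exists m; split => // k Hk Pk; apply: Hn; exists k.
Qed.

Section SuccMin.
Implicit Types (S : nat -> Prop) (i j : nat).

Lemma succ_min_uniq S i j j' : succ_min S i j -> succ_min S i j' -> j = j'.
Proof.
case=> [[Hij [Sj Hj]]|[HS ->]]; case=> [[Hij' [Sj' Hj']]|[HS' ->]] //.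
- by case: (ltngtP j j') => // Hlt; [case: (Hj' j)|case: (Hj j')].
- by case: (HS' j).
- by case: (HS j').
Qed.

Lemma succ_min_exists S i : exists j, succ_min S i j.
Proof.
case: (classic (exists k, i < k /\ S k)) => [/ex_least [j [[Hij Sj] Hmin]]|Hn].
  by exists j; left; do 2!split => //; move=> k Hik Hkj Sk; apply: (Hmin k Hkj).
by exists i.+1; right; split => // k Hk Sk; apply: Hn; exists k.
Qed.

Lemma succ_min_ext S S' i j :
  (forall k, S k <-> S' k) -> succ_min S i j -> succ_min S' i j.
Proof.
move=> HS; case=> [[Hij [Sj Hj]]|[Hn ->]]; [left|right].
  by do 2!split => //; [apply/HS | move=> k Hik Hkj; rewrite -HS; apply: Hj].
by split => // k Hk; rewrite -HS; apply: Hn.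
Qed.
End SuccMin.

Definition lfp (A : Type) (F : (A -> Prop) -> A -> Prop) : A -> Prop :=
  fun a => forall I, (forall x, F I x -> I x) -> I a.

Definition monotone (A : Type) (F : (A -> Prop) -> A -> Prop) : Prop :=
  forall I J, (forall x, I x -> J x) -> forall x, F I x -> F J x.

Lemma lfp_fold (A : Type) (F : (A -> Prop) -> A -> Prop) :
  monotone F -> forall a, F (lfp F) a -> lfp F a.
Proof. by move=> monoF a Ha I HI; apply: (HI); apply: monoF Ha => x /(_ I HI). Qed.

Section LfpTransfer.
Variables A B : Type.
Implicit Types (F : (A -> Prop) -> A -> Prop) (G : (B -> Prop) -> B -> Prop).

Lemma lfp_transfer (R : A -> B -> Prop) F G :
  (forall a b b', R a b -> R a b' -> b = b') -> (forall a, exists b, R a b) ->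
  monotone F -> monotone G ->
  (forall I J, (forall a b, R a b -> (I a <-> J b)) ->
     forall a b, R a b -> (F I a <-> G J b)) ->
  forall a b, R a b -> (lfp F a <-> lfp G b).
Proof.
move=> Rfun Rtot monoF monoG FG a b Rab; split.
- pose I x := forall y, R x y -> lfp G y.
  have HI : forall x y, R x y -> (I x <-> lfp G y).
    by move=> x y Rxy; split=> [/(_ y Rxy) //|HG y' Rxy']; rewrite -(Rfun _ _ _ Rxy Rxy').
  move=> HF; suff HIa : I a by apply: HIa.
  apply: (HF I) => x HFx y Rxy.
  by apply: (lfp_fold monoG); rewrite -(FG I _ HI x y Rxy).
- pose J y := forall x, R x y -> lfp F x.
  pose I x := forall y, R x y -> J y.
  have HI : forall x y, R x y -> (I x <-> J y).
    by move=> x y Rxy; split=> [/(_ y Rxy) //|HJ y' Rxy']; rewrite -(Rfun _ _ _ Rxy Rxy').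
  move=> HG; suff HJb : J b by apply: HJb.
  apply: (HG J) => y HGy x Rxy.
  apply: (lfp_fold monoF); apply: (monoF I).
    by move=> x' HIx'; have [y' Rxy'] := Rtot x'; apply: (HIx' y' Rxy' x' Rxy').
  by rewrite (FG I J HI x y Rxy).
Qed.

Lemma lfp_transfer_at F G (a : A) (b : B) :
  monotone F -> monotone G ->
  (forall I J, (forall y, y <> b -> (J y <-> lfp G y)) -> (I a <-> J b) ->
     (F I a <-> G J b)) ->
  lfp F a <-> lfp G b.
Proof.
move=> monoF monoG FG.
have FtoG : lfp F a -> lfp G b.
  move=> HF; apply: (HF (fun x => x = a -> lfp G b)) => // x Hx Exa; subst x.
  apply: (lfp_fold monoG); rewrite -(FG (fun x => x = a -> lfp G b)) //.
  by split=> [/(_ erefl) | HG _].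
split=> // HG.
pose J y := (y = b /\ lfp F a) \/ (y <> b /\ lfp G y).
have J_off : forall y, y <> b -> (J y <-> lfp G y).
  by move=> y Hyb; split=> [[[]|[]]|HGy]; [|done|right].
suff [[_ //]|[]//] : J b.
apply: (HG J) => y HJy; case: (classic (y = b)) => [Eyb|Nyb].
  subst y; left; split => //; apply: (lfp_fold monoF); rewrite (FG (lfp F) J) //.
  by split=> [|[[]|[]]//]; left.
right; split => //; apply: (lfp_fold monoG); apply: monoG HJy.
by move=> x [[-> /FtoG]|[]].
Qed.
End LfpTransfer.

Section FormulaBasics.
Variables (AP : finType) (L : Type).
Implicit Types (d : tform AP) (psi : mform AP L).

Lemma tsem_ext tr V V' d :
  (forall Y i, tfree Y d -> (V Y i <-> V' Y i)) ->
  forall i, tsem tr V d i <-> tsem tr V' d i.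
Proof.
elim: d V V' => [a|Y|d1 IH1 d2 IH2|d1 IH1|f d1 IH1|Y d1 IH1] V V' HV i /=.
- by [].
- exact: HV.
- by rewrite (IH1 V V') ?(IH2 V V') // => Z k HZ; apply: HV; [right|left].
- by rewrite (IH1 V V').
- by split=> -[j [Hj Hd]]; exists j; split=> //; move: Hd; rewrite (IH1 V V').
- have HI I k : tsem tr (upd V Y I) d1 k <-> tsem tr (upd V' Y I) d1 k.
    apply: IH1 => Z m HZ; rewrite /upd; case: eqP => // NZY.
    by apply: HV; split => // EZY; apply: NZY.
  by split=> Hmu I HI'; apply: Hmu => k Hk; apply: HI'; move: Hk; rewrite HI.
Qed.

Lemma tpol_notfree p Y d : ~ tfree Y d -> tpol p Y d.
Proof.
elim: d p => [a|Z|d1 IH1 d2 IH2|d1 IH1|f d1 IH1|Z d1 IH1] p //= HY.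
- by split; [apply: IH1|apply: IH2]; tauto.
- exact: IH1.
- exact: IH1.
- case: (eqVneq Z Y) => [->|NZY]; first by left.
  by right; apply: IH1 => Hf; apply: HY; split => // /eqP; rewrite (negbTE NZY).
Qed.

Definition mclosed psi := forall X, ~ mfree X psi.

Fixpoint mpos_closed psi : Prop :=
  match psi with
  | MTest d _ => tclosed d
  | MVar _ => True
  | MOr p1 p2 => mpos_closed p1 /\ mpos_closed p2
  | MNot p1 | MNext _ p1 => mpos_closed p1
  | MMu X p1 => mpol true X p1 /\ mpos_closed p1
  end.

Lemma mwf_mpos_closed lwf k psi : mwf lwf k psi -> mpos_closed psi.
Proof.
elim: psi => [d j|Y|p1 IH1 p2 IH2|p1 IH1|l p1 IH1|X p1 IH1] //=.
- by case=> _ [].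
- by case=> /IH1 ? /IH2.
- by case=> _ /IH1.
- by case=> ? /IH1.
Qed.

Lemma mpol_notfree p X psi : ~ mfree X psi -> mpol p X psi.
Proof.
elim: psi p => [d j|Z|p1 IH1 p2 IH2|p1 IH1|l p1 IH1|Z p1 IH1] p //= HX.
- by split; [apply: IH1|apply: IH2]; tauto.
- exact: IH1.
- exact: IH1.
- case: (eqVneq Z X) => [->|NZX]; first by left.
  by right; apply: IH1 => Hf; apply: HX; split => // /eqP; rewrite (negbTE NZX).
Qed.

Variable step : L -> nat -> trace AP -> nat -> nat -> Prop.
Variable Pi : seq (trace AP).
Notation msem := (msem step Pi).

Lemma msem_test W d j v : msem W (MTest L d j) v <-> tsem (nth (dtr AP) Pi j) V0 d (v j).
Proof. by []. Qed.

Lemma msem_or W p1 p2 v : msem W (MOr p1 p2) v <-> msem W p1 v \/ msem W p2 v.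
Proof. by []. Qed.

Lemma msem_not W p1 v : msem W (MNot p1) v <-> ~ msem W p1 v.
Proof. by []. Qed.

Lemma msem_ext W W' psi :
  (forall X v, mfree X psi -> (W X v <-> W' X v)) ->
  forall v, msem W psi v <-> msem W' psi v.
Proof.
elim: psi W W' => [d j|Y|p1 IH1 p2 IH2|p1 IH1|l p1 IH1|Y p1 IH1] W W' HW v /=.
- by [].
- exact: HW.
- by rewrite (IH1 W W') ?(IH2 W W') // => Z u HZ; apply: HW; [right|left].
- by rewrite (IH1 W W').
- by split=> -[w [Hw Hp]]; exists w; split=> //; move: Hp; rewrite (IH1 W W').
- have HI I u : msem (upd W Y I) p1 u <-> msem (upd W' Y I) p1 u.
    apply: IH1 => Z x HZ; rewrite /upd; case: eqP => // NZY.
    by apply: HW; split => // EZY; apply: NZY.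
  by split=> Hmu I HI'; apply: Hmu => u Hu; apply: HI'; move: Hu; rewrite HI.
Qed.

Lemma msem_closed W W' psi v :
  mclosed psi -> msem W psi v <-> msem W' psi v.
Proof. by move=> Hc; apply: msem_ext => X u /Hc. Qed.

Lemma msem_upd_notfree W X I psi v :
  ~ mfree X psi -> msem (upd W X I) psi v <-> msem W psi v.
Proof.
move=> NX; apply: msem_ext => Z u HZ; rewrite /upd; case: eqP => // EZX.
by rewrite EZX in HZ.
Qed.

Lemma msem_pol_mono X psi : forall p W W',
  (forall Z v, Z <> X -> (W Z v <-> W' Z v)) -> (forall v, W X v -> W' X v) ->
  mpol p X psi ->
  forall v, if p then msem W psi v -> msem W' psi v
            else msem W' psi v -> msem W psi v.
Proof.
elim: psi => [d j|Y|p1 IH1 p2 IH2|p1 IH1|l p1 IH1|Y p1 IH1] p W W' Hoff HX /= Hp v.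
- by case: p.
- case: (eqVneq Y X) => [EYX|NYX].
    by subst Y; rewrite (Hp erefl); apply: HX.
  by have := Hoff Y v (elimN eqP NYX); case: p Hp => /=; tauto.
- case: Hp => Hp1 Hp2.
  move: (IH1 p W W' Hoff HX Hp1 v) (IH2 p W W' Hoff HX Hp2 v).
  by case: p Hp1 Hp2; tauto.
- by move: (IH1 (~~ p) W W' Hoff HX Hp v); case: p Hp => /=; tauto.
- have IH w := IH1 p W W' Hoff HX Hp w.
  by case: p IH Hp => IH _ [w [Hw Hpw]]; exists w; split=> //; apply: IH.
- case: (eqVneq Y X) => [EYX|NYX].
    subst Y; have HI I u : msem (upd W X I) p1 u <-> msem (upd W' X I) p1 u.
      by apply: msem_ext => Z x _; rewrite /upd; case: eqP => // NZX; apply: Hoff.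
    by case: p Hp => _ Hmu I HI'; apply: Hmu => u Hu; apply: HI'; move: Hu; rewrite HI.
  case: Hp => [EYX|Hp]; first by rewrite EYX eqxx in NYX.
  have Hoff' I Z u : Z <> X -> (upd W Y I Z u <-> upd W' Y I Z u).
    by rewrite /upd; case: eqP => // _; apply: Hoff.
  have HX' I u : upd W Y I X u -> upd W' Y I X u.
    by rewrite /upd eq_sym (negbTE NYX); apply: HX.
  have IH I := IH1 p _ _ (Hoff' I) (HX' I) Hp.
  by case: p IH Hp => IH _ Hmu I HI'; apply: Hmu => u Hu; apply: HI'; apply: IH.
Qed.

Lemma msem_monotone W X psi :
  mpol true X psi -> monotone (fun I => msem (upd W X I) psi).
Proof.
move=> Hp I J HIJ; apply: (@msem_pol_mono X psi true) Hp.
- by move=> Z u NZX; rewrite /upd; case: eqP.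
- by move=> u; rewrite /upd eqxx; apply: HIJ.
Qed.
End FormulaBasics.

Section Lag.
Variable E : nat -> nat -> Prop.
Hypothesis E_refl : forall i, E i i.
Hypothesis E_sym : forall i j, E i j -> E j i.
Hypothesis E_trans : forall i j k, E i j -> E j k -> E i k.

Definition change i := ~ E i i.+1.
Definition stut_succ i j := succ_min (fun k => ~ E i k) i j.
Definition mumb_succ i j := succ_min change i j.
Definition short_lag := change 0 \/ forall k, ~ change k.

(* The mumbling position [w] stands for the stuttering position [t]. *)
Definition lagged (short : bool) w t :=
  if short then t = w.+1 else exists m, mumb_succ w m /\ t = m.+1.

Lemma E_no_change i n :
  i <= n -> (forall k, i <= k -> k < n -> E k k.+1) -> E i n.
Proof.
elim: n => [|n IH] Hin Hnc; first by have -> : i = 0 by lia.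
case: (eqVneq i n.+1) => [->|Nin]; first exact: E_refl.
apply: (E_trans (j := n)); last by apply: Hnc; lia.
by apply: IH => [|k Hik Hkn]; [lia|apply: Hnc; lia].
Qed.

Lemma first_change_or_none i :
  (exists j, i <= j /\ change j /\ forall k, i <= k -> k < j -> ~ change k) \/
  (forall k, i <= k -> ~ change k).
Proof.
case: (classic (exists j, i <= j /\ change j)) => [/ex_least [j [[Hij Hj] Hmin]]|Hn].
  by left; exists j; split=> //; split=> // k Hik Hkj Hk; apply: (Hmin k Hkj).
by right => k Hik Hk; apply: Hn; exists k.
Qed.

Lemma stut_succ_first_change i j :
  i <= j -> change j -> (forall k, i <= k -> k < j -> ~ change k) -> stut_succ i j.+1.
Proof.
move=> Hij Hj Hmin; have Eij : E i j by apply: E_no_change => // k *; apply: NNPP; apply: Hmin.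
left; split; first lia; split.
  by move=> Eij1; apply: Hj; apply: E_trans (E_sym Eij) Eij1.
by move=> k Hik Hkj; apply; apply: E_no_change => [|m *]; [lia|apply: NNPP; apply: Hmin; lia].
Qed.

Lemma stut_succ_no_change i : (forall k, i <= k -> ~ change k) -> stut_succ i i.+1.
Proof.
move=> Hn; right; split=> // k Hik; apply; apply: E_no_change => [|m *]; first lia.
by apply: NNPP; apply: Hn; lia.
Qed.

Lemma stut_succ_after_mumb_succ w w' t :
  mumb_succ w w' -> stut_succ w.+1 t -> t = w'.+1.
Proof.
move=> Hm Hs; case: (first_change_or_none w.+1) => [[j [Hj [Hcj Hmin]]]|Hn].
  rewrite (succ_min_uniq Hs (stut_succ_first_change Hj Hcj Hmin)).
  suff Hm' : mumb_succ w j by rewrite (succ_min_uniq Hm Hm').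
  by left; split=> //; split=> // k Hwk Hkj; apply: Hmin.
rewrite (succ_min_uniq Hs (stut_succ_no_change Hn)).
suff Hm' : mumb_succ w w.+1 by rewrite (succ_min_uniq Hm Hm').
by right; split=> // k Hwk; apply: Hn.
Qed.

Lemma lagged_init (short : bool) t :
  (short <-> short_lag) -> stut_succ 0 t -> lagged short 0 t.
Proof.
move=> Hshort Hs; case: (first_change_or_none 0) => [[j [_ [Hcj Hmin]]]|Hn]; last first.
  have Hl : short_lag by right => k; apply: Hn.
  by move/Hshort: Hl => -> /=; apply: succ_min_uniq Hs (stut_succ_no_change Hn).
rewrite (succ_min_uniq Hs (stut_succ_first_change (leq0n j) Hcj Hmin)).
case: (posnP j) => [Ej0|Hj0].
  by subst j; have /Hshort -> : short_lag by left.
have Nl : ~ short_lag.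
  by case=> [Hc0|Hnc]; [apply: (Hmin 0)|apply: (Hnc j)].
case: short Hshort => Hshort; first by case: Nl; apply/Hshort.
by exists j; split=> //; left; split=> //; split=> // k _ Hkj; apply: Hmin.
Qed.

Lemma lagged_step short w t w' t' :
  lagged short w t -> mumb_succ w w' -> stut_succ t t' -> lagged short w' t'.
Proof.
case: short => /=; first by move=> -> Hm Hs; apply: stut_succ_after_mumb_succ Hm Hs.
move=> [m [Hm ->]] Hm'; rewrite -(succ_min_uniq Hm Hm') => Hs.
have [m2 Hm2] := succ_min_exists change m.
by exists m2; split=> //; apply: stut_succ_after_mumb_succ Hm2 Hs.
Qed.

Lemma lagged_fun short w t t' : lagged short w t -> lagged short w t' -> t = t'.
Proof.
case: short => /= [-> -> //|[m [Hm ->]] [m' [Hm' ->]]].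
by rewrite (succ_min_uniq Hm Hm').
Qed.

Lemma lagged_exists short w : exists t, lagged short w t.
Proof.
case: short => /=; first by exists w.+1.
by have [m Hm] := succ_min_exists change w; exists m.+1, m.
Qed.

Lemma lagged_pos short w t : lagged short w t -> 0 < t.
Proof. by case: short => /= [->|[m [_ ->]]]. Qed.
End Lag.

Section DerivedTraceFormulae.
Variable AP : finType.
Implicit Types (d D : tform AP) (tr : trace AP) (V : nat -> nat -> Prop).

Definition tchange d : tform AP :=
  TOr (TAnd d (TNot (TNext Dg d))) (TAnd (TNot d) (TNext Dg d)).

(* [ff] is a false formula of the basis, so that the empty disjunction stays in it. *)
Definition tchange_any (ff : tform AP) (g : seq (tform AP)) : tform AP :=
  foldr (fun d acc => TOr (tchange d) acc) ff g.

Definition teventually D : tform AP := TUntil 0 (TNot D) D.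

Definition tshort_lag D : tform AP := TOr D (TNot (teventually D)).

Definition tafter_next D d : tform AP :=
  TNext Dg (TOr (TUntil 0 (TNot D) (TAnd D (TNext Dg d)))
                (TAnd (TNot (teventually D)) (TNext Dg d))).

Definition tshift (short : bool) D d : tform AP :=
  if short then TNext Dg d else tafter_next D d.

Lemma tsem_or tr V d1 d2 i :
  tsem tr V (TOr d1 d2) i <-> tsem tr V d1 i \/ tsem tr V d2 i.
Proof. by []. Qed.

Lemma tsem_not tr V d i : tsem tr V (TNot d) i <-> ~ tsem tr V d i.
Proof. by []. Qed.

Lemma tsem_and tr V d1 d2 i :
  tsem tr V (TAnd d1 d2) i <-> tsem tr V d1 i /\ tsem tr V d2 i.
Proof. by split=> [H|/=]; [split; apply: NNPP => Hn; apply: H|]; tauto. Qed.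

Lemma tsem_nextg tr V d i : tsem tr V (TNext Dg d) i <-> tsem tr V d i.+1.
Proof. by split=> [[j [-> //]]|Hd]; exists i.+1. Qed.

Lemma tsem_until tr V Y d1 d2 i : ~ tfree Y d1 -> ~ tfree Y d2 ->
  tsem tr V (TUntil Y d1 d2) i <->
  exists k, i <= k /\ tsem tr V d2 k /\ forall m, i <= m -> m < k -> tsem tr V d1 m.
Proof.
move=> N1 N2.
have upd_notfree d I k : ~ tfree Y d -> tsem tr (upd V Y I) d k <-> tsem tr V d k.
  move=> NY; apply: tsem_ext => Z m HZ; rewrite /upd; case: eqP => // EZY.
  by case: NY; rewrite -EZY.
have Hbody I k : tsem tr (upd V Y I) (TOr d2 (TAnd d1 (TNext Dg (TVar AP Y)))) k <->
                 tsem tr V d2 k \/ tsem tr V d1 k /\ I k.+1.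
  by rewrite tsem_or tsem_and tsem_nextg (upd_notfree d1) // (upd_notfree d2) //= /upd eqxx.
split.
  move=> Hmu; apply: (Hmu (fun m => exists k, m <= k /\ tsem tr V d2 k /\
                      forall m', m <= m' -> m' < k -> tsem tr V d1 m')) => k /Hbody.
  case=> [Hd2|[Hd1 [k' [Hkk' [Hd2 Hd1']]]]]; first by exists k; split=> //; split=> // m *; lia.
  exists k'; split; first lia; split=> // m Hkm Hmk'.
  by case: (eqVneq m k) => [->//|Nmk]; apply: Hd1'; lia.
move=> [k [Hik [Hd2 Hd1]]] I HI.
suff Hall n : forall m, m + n = k -> i <= m -> I m by apply: (Hall (k - i)); lia.
elim: n => [|n IH] m Hmn Him; apply: HI; apply/Hbody; first by left; have -> : m = k by lia.
by right; split; [apply: Hd1; lia|apply: IH; lia].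
Qed.

Lemma tsem_teventually tr V D i : tclosed D ->
  tsem tr V (teventually D) i <-> exists k, i <= k /\ tsem tr V D k.
Proof.
move=> Dc; rewrite tsem_until; [|by move=> /(Dc 0)|by apply: Dc].
split=> [[k [Hik [HD _]]]|/ex_least [k [[Hik HD] Hmin]]]; first by exists k.
exists k; split=> //; split=> // m Him Hmk HDm; apply: (Hmin m Hmk); split=> //.
Qed.

Lemma tsem_tshort_lag tr V D : tclosed D ->
  tsem tr V (tshort_lag D) 0 <-> tsem tr V D 0 \/ forall k, ~ tsem tr V D k.
Proof.
move=> Dc; rewrite tsem_or tsem_not tsem_teventually //.
by split=> -[HD|Hn]; [left|right=> k Hk; apply: Hn; exists k|left|right=> -[k [_ /Hn]]].
Qed.

Lemma tsem_tchange tr V d i :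
  tsem tr V (tchange d) i <-> ~ (tsem tr V d i <-> tsem tr V d i.+1).
Proof.
rewrite tsem_or !tsem_and !tsem_not tsem_nextg.
by case: (classic (tsem tr V d i)); case: (classic (tsem tr V d i.+1)); tauto.
Qed.

Lemma tsem_tchange_any ff g tr i : (forall tr i, ~ tsem tr V0 ff i) ->
  tsem tr V0 (tchange_any ff g) i <->
  ~ (forall d, lIn d g -> (tsem tr V0 d i <-> tsem tr V0 d i.+1)).
Proof.
move=> ff_false; elim: g => [|d g IH].
  by split=> [/ff_false|Hn] //; case: Hn => d [].
rewrite [tchange_any _ _]/= -/(tchange_any ff g) tsem_or tsem_tchange IH.
split=> [[Hd|Hg] Hall|Hn]; first by apply: Hd; apply: Hall; left.
  by apply: Hg => d' Hd'; apply: Hall; right.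
apply: NNPP => Hc; apply: Hn => d' [<-|Hd']; apply: NNPP => Hd'n; apply: Hc; first by left.
by right=> Hall; apply: Hd'n; apply: Hall.
Qed.

Lemma tsem_tafter_next tr D d w m : tclosed D -> tclosed d ->
  succ_min (tsem tr V0 D) w m ->
  tsem tr V0 (tafter_next D d) w <-> tsem tr V0 d m.+1.
Proof.
move=> Dc dc Hm.
rewrite tsem_nextg tsem_or tsem_until; first last.
- by move=> /= -[/(Dc 0)|/(dc 0)].
- by move=> /(Dc 0).
rewrite tsem_and tsem_not tsem_teventually // tsem_nextg.
have HDd k : tsem tr V0 (TAnd D (TNext Dg d)) k <-> tsem tr V0 D k /\ tsem tr V0 d k.+1.
  by rewrite tsem_and tsem_nextg.
case: Hm => [[Hwm [HDm Hmin]]|[Hn ->]].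
  split=> [[[k [Hk [/HDd [HDk Hd] Hbefore]]]|[Hnev _]]|Hd].
  - case: (ltngtP k m) => [Hkm|Hmk|Ekm]; last by rewrite -Ekm.
      by case: (Hmin k).
    by case: (Hbefore m).
  - by case: Hnev; exists m.
  - left; exists m; split=> //; split; first by apply/HDd.
    by move=> k Hk Hkm; apply: Hmin.
split=> [[[k [Hk [/HDd [HDk _] _]]]|[_ Hd]] //|Hd]; first by case: (Hn k).
by right; split=> // -[k [Hk /(Hn k)]].
Qed.
End DerivedTraceFormulae.

Section DerivedTraceFormulaeWf.
Variable AP : finType.
Implicit Types (d D ff : tform AP) (B : tform AP -> Prop).

Lemma tclosed_or d1 d2 : tclosed d1 -> tclosed d2 -> tclosed (TOr d1 d2).
Proof. by move=> C1 C2 Y /= [/C1|/C2]. Qed.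

Lemma tclosed_not d : tclosed d -> tclosed (TNot d).
Proof. by []. Qed.

Lemma tclosed_next f d : tclosed d -> tclosed (TNext f d).
Proof. by []. Qed.

Lemma tclosed_and d1 d2 : tclosed d1 -> tclosed d2 -> tclosed (TAnd d1 d2).
Proof. by move=> C1 C2; apply/tclosed_not/tclosed_or. Qed.

Lemma tclosed_until Y d1 d2 : tclosed d1 -> tclosed d2 -> tclosed (TUntil Y d1 d2).
Proof. by move=> C1 C2 Z /= [NYZ [/C2|[/C1|]]]. Qed.

Lemma tpos_until Y d1 d2 :
  tclosed d1 -> tclosed d2 -> tpos d1 -> tpos d2 -> tpos (TUntil Y d1 d2).
Proof. by move=> C1 C2 P1 P2 /=; do !split=> //; apply: tpol_notfree. Qed.

Lemma twf_tchange_any ff g :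
  twf ff -> (forall d, lIn d g -> twf d) -> twf (tchange_any ff g).
Proof.
move=> [Cff Pff]; elim: g => [|d g IH] //= Hg.
have [Cd Pd] : twf d by apply: Hg; left.
have [Cg Pg] : twf (tchange_any ff g) by apply: IH => d' Hd'; apply: Hg; right.
split; last by rewrite /=; tauto.
by apply: tclosed_or => //; apply: tclosed_or; apply: tclosed_and.
Qed.

Lemma twf_tshort_lag D : twf D -> twf (tshort_lag D).
Proof.
move=> [CD PD]; split; first by apply/tclosed_or/tclosed_not/tclosed_until.
by split=> //; apply: tpos_until.
Qed.

Lemma twf_tshift short D d : twf D -> twf d -> twf (tshift short D d).
Proof.
move=> [CD PD] [Cd Pd]; case: short; first by [].
have CE : tclosed (teventually D) by apply: tclosed_until.
have CDd : tclosed (TAnd D (TNext Dg d)) by apply: tclosed_and.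
split; first by apply/tclosed_next/tclosed_or; [apply: tclosed_until|apply: tclosed_and].
by split; [apply: tpos_until|split=> //; apply: tpos_until].
Qed.

Definition basis_closed B : Prop :=
  [/\ forall d1 d2, B d1 -> B d2 -> B (TOr d1 d2), forall d, B d -> B (TNot d),
      forall d, B d -> B (TNext Dg d) &
      forall d1 d2, B d1 -> B d2 -> tclosed d1 -> tclosed d2 -> B (TUntil 0 d1 d2)].

Section BasisClosed.
Variable B : tform AP -> Prop.
Hypothesis HB : basis_closed B.

Lemma basis_and d1 d2 : B d1 -> B d2 -> B (TAnd d1 d2).
Proof. by case: HB => Bor Bnot _ _ B1 B2; apply/Bnot/Bor; apply: Bnot. Qed.

Lemma basis_tchange_any ff g :
  B ff -> (forall d, lIn d g -> B d) -> B (tchange_any ff g).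
Proof.
case: HB => Bor Bnot Bnext _ Bff; elim: g => [|d g IH] //= Hg.
apply: (Bor); last by apply: IH => d' Hd'; apply: Hg; right.
have Bd : B d by apply: Hg; left.
by apply: (Bor); apply: basis_and; auto.
Qed.

Lemma basis_tshort_lag D : B D -> tclosed D -> B (tshort_lag D).
Proof. by case: HB => Bor Bnot _ Bun BD CD; apply/Bor/Bnot/Bun; auto. Qed.

Lemma basis_tshift short D d :
  B D -> B d -> tclosed D -> tclosed d -> B (tshift short D d).
Proof.
case: HB => Bor Bnot Bnext Bun BD Bd CD Cd; case: short => /=; first exact: Bnext.
apply/Bnext/Bor.
  apply: Bun; [exact: Bnot|apply: basis_and => //; exact: Bnext|exact: CD|exact: tclosed_and].
by apply: basis_and; [apply/Bnot/Bun => //; exact: Bnot|exact: Bnext].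
Qed.
End BasisClosed.
End DerivedTraceFormulaeWf.

Section Translation.
Variables (AP : finType) (ff : tform AP) (G : slabel AP).
Notation MF := (mform AP (mlabel AP)).
Notation SF := (mform AP (slabel AP)).
Notation mvar := (MVar AP (mlabel AP)).
Implicit Types (short : nat -> bool) (s : nat -> MF) (psi : SF).

Definition Dchange j : tform AP := tchange_any ff (nth [::] G j).
Definition Delta : mlabel AP := map (tchange_any ff) G.

(* Evaluated at mumbling positions [w] standing for the stuttering positions
   [t] with [lagged _ (short j) (w j) (t j)]. *)
Fixpoint trans_lag short s psi : MF :=
  match psi with
  | MTest d j => MTest _ (tshift (short j) (Dchange j) d) j
  | MVar X => s X
  | MOr p1 p2 => MOr (trans_lag short s p1) (trans_lag short s p2)
  | MNot p1 => MNot (trans_lag short s p1)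
  | MNext _ p1 => MNext Delta (trans_lag short s p1)
  | MMu X p1 => MMu X (trans_lag short (upd s X (mvar X)) p1)
  end.

(* Evaluated at the origin, where both sides agree. The first next operator is
   absorbed: the mumbling origin already stands for the stuttering successor of
   the origin. Below it, [X] is replaced by the lag translation of its fixpoint. *)
Fixpoint trans_init short s psi : MF :=
  match psi with
  | MTest d j => MTest _ d j
  | MVar X => mvar X
  | MOr p1 p2 => MOr (trans_init short s p1) (trans_init short s p2)
  | MNot p1 => MNot (trans_init short s p1)
  | MNext _ p1 => trans_lag short s p1
  | MMu X p1 => MMu X (trans_init short (upd s X (trans_lag short s (MMu X p1))) p1)
  end.

Definition MAnd (p1 p2 : MF) : MF := MNot (MOr (MNot p1) (MNot p2)).

Fixpoint guess_lags n short psi : MF :=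
  match n with
  | 0 => trans_init short mvar psi
  | n'.+1 =>
      let lag_test := MTest _ (tshort_lag (Dchange n')) n' in
      MOr (MAnd lag_test (guess_lags n' (upd short n' true) psi))
          (MAnd (MNot lag_test) (guess_lags n' (upd short n' false) psi))
  end.

Definition var_or_closed s := forall X, s X = mvar X \/ mclosed (s X).

Lemma var_or_closed_upd s X rho :
  var_or_closed s -> rho = mvar X \/ mclosed rho -> var_or_closed (upd s X rho).
Proof. by move=> Hs Hrho Y; rewrite /upd; case: eqP => [->|]. Qed.

Lemma var_or_closed_notfree s X Y : var_or_closed s -> Y <> X -> ~ mfree X (s Y).
Proof. by move=> Hs NYX; case: (Hs Y) => [-> /= EYX|/(_ X)] //; apply: NYX. Qed.

Definition steps_as psi := forall l, lIn l (mlabels psi) ->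
  forall j tr i i', sstep l j tr i i' <-> sstep G j tr i i'.

Lemma steps_as_or p1 p2 : steps_as (MOr p1 p2) -> steps_as p1 /\ steps_as p2.
Proof. by move=> H; split=> l Hl; apply: H; rewrite /= lIn_cat; tauto. Qed.

Lemma steps_as_next l p1 : steps_as (MNext l p1) ->
  steps_as p1 /\ forall j tr i i', sstep l j tr i i' <-> sstep G j tr i i'.
Proof. by move=> H; split=> [l' Hl'|]; apply: H; [right|left]. Qed.

Lemma mfree_trans_lag short s psi Z :
  mfree Z (trans_lag short s psi) -> exists Y, mfree Y psi /\ mfree Z (s Y).
Proof.
elim: psi s => [d j|Y|p1 IH1 p2 IH2|p1 IH1|l p1 IH1|X p1 IH1] s //=.
- by exists Y.
- by case=> [/IH1|/IH2] [Y [HY HZ]]; exists Y; tauto.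
- by move/IH1.
- by move/IH1.
- case=> NXZ /IH1 [Y [HY]]; rewrite /upd; case: eqP => [_ /= EXZ|NYX HZ]; first by case: NXZ.
  by exists Y; split=> //; split=> // EXY; rewrite EXY in NYX.
Qed.

Lemma mfree_trans_init short s psi Z :
  mfree Z (trans_init short s psi) ->
  mfree Z psi \/ exists Y, mfree Y psi /\ mfree Z (s Y).
Proof.
elim: psi s => [d j|Y|p1 IH1 p2 IH2|p1 IH1|l p1 IH1|X p1 IH1] s //=.
- by left.
- by case=> [/IH1|/IH2] [HZ|[Y [HY HZ]]]; try tauto; right; exists Y; tauto.
- by move/IH1.
- by move/mfree_trans_lag; right.
- case=> NXZ /IH1 [HZ|[Y [HY]]]; first by left.
  rewrite /upd; case: eqP => [_ HZ|NYX HZ].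
    by right; apply: (mfree_trans_lag (short := short) (psi := MMu X p1)).
  by right; exists Y; split=> //; split=> // EXY; rewrite EXY in NYX.
Qed.

Lemma mpol_trans_lag short psi : forall p X s,
  mpol p X psi -> s X = mvar X -> (forall Y, Y <> X -> ~ mfree X (s Y)) ->
  mpol p X (trans_lag short s psi).
Proof.
elim: psi => [d j|Y|p1 IH1 p2 IH2|p1 IH1|l p1 IH1|Z p1 IH1] p X s //= Hp HsX Hs.
- case: (eqVneq Y X) => [EYX|NYX]; first by subst Y; rewrite HsX.
  by apply/mpol_notfree/Hs/eqP.
- by case: Hp => Hp1 Hp2; split; [apply: IH1|apply: IH2].
- exact: IH1.
- exact: IH1.
- case: (eqVneq Z X) => [->|NZX]; first by left.
  right; case: Hp => [EZX|Hp]; first by rewrite EZX eqxx in NZX.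
  apply: IH1 => //; first by rewrite /upd eq_sym (negbTE NZX).
  move=> Y NYX; rewrite /upd; case: eqP => [_ /= EZX|_]; last exact: Hs.
  by rewrite EZX eqxx in NZX.
Qed.

Lemma mpol_trans_init short psi : forall p X s,
  mpol p X psi -> (forall Y, ~ mfree X (s Y)) -> mpol p X (trans_init short s psi).
Proof.
elim: psi => [d j|Y|p1 IH1 p2 IH2|p1 IH1|l p1 IH1|Z p1 IH1] p X s //= Hp Hs.
- by case: Hp => Hp1 Hp2; split; [apply: IH1|apply: IH2].
- exact: IH1.
- by apply: mpol_notfree => /mfree_trans_lag [Y [_ /Hs]].
- case: (eqVneq Z X) => [->|NZX]; first by left.
  right; case: Hp => [EZX|Hp]; first by rewrite EZX eqxx in NZX.
  apply: IH1 => // Y; rewrite /upd; case: eqP => _; last exact: Hs.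
  by move=> /(mfree_trans_lag (psi := MMu Z p1)) [Y' [_ /Hs]].
Qed.
End Translation.

Section Correctness.
Variables (AP : finType) (ff : tform AP) (G : slabel AP) (Pi : seq (trace AP)).
Hypothesis ff_false : forall tr i, ~ tsem tr V0 ff i.
Hypothesis ff_wf : twf ff.
Hypothesis G_wf : forall g d, lIn g G -> lIn d g -> twf d.
Notation MF := (mform AP (mlabel AP)).
Notation SF := (mform AP (slabel AP)).
Notation mvar := (MVar AP (mlabel AP)).
Notation msemM := (msem (@mstep AP) Pi).
Notation msemS := (msem (@sstep AP) Pi).

Definition trace_of j := nth (dtr AP) Pi j.
Definition agree j i k := forall d, lIn d (nth [::] G j) ->
  (tsem (trace_of j) V0 d i <-> tsem (trace_of j) V0 d k).

Lemma agree_refl j i : agree j i i. Proof. by []. Qed.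
Lemma agree_sym j i k : agree j i k -> agree j k i.
Proof. by move=> H d /H; tauto. Qed.
Lemma agree_trans j i k l : agree j i k -> agree j k l -> agree j i l.
Proof. by move=> H1 H2 d Hd; move: (H1 d Hd) (H2 d Hd); tauto. Qed.

Lemma twf_Dchange j : twf (Dchange ff G j).
Proof.
apply: twf_tchange_any => // d; case: (ltnP j (size G)) => [Hj|Hj]; last by rewrite nth_default.
exact/G_wf/lIn_nth.
Qed.

Lemma tsem_Dchange j i : tsem (trace_of j) V0 (Dchange ff G j) i <-> change (agree j) i.
Proof. exact: tsem_tchange_any. Qed.

Lemma tsem_short_lag_Dchange j :
  tsem (trace_of j) V0 (tshort_lag (Dchange ff G j)) 0 <-> short_lag (agree j).
Proof.
rewrite tsem_tshort_lag; last exact: (twf_Dchange j).1.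
rewrite /short_lag tsem_Dchange.
by split=> -[H|H]; [left|right=> k /tsem_Dchange /H|left|right=> k /tsem_Dchange /H].
Qed.

Lemma mstep_Delta j w w' : mstep (Delta ff G) j (trace_of j) w w' <-> mumb_succ (agree j) w w'.
Proof.
have HD i : tsem (trace_of j) V0 (nth (TVar AP 0) (Delta ff G) j) i <-> change (agree j) i.
  rewrite -tsem_Dchange /Delta; case: (ltnP j (size G)) => Hj; first by rewrite (nth_map [::]).
  rewrite /Dchange !nth_default ?size_map //.
  by split=> [|/ff_false].
by split; apply: succ_min_ext => i; rewrite HD.
Qed.

Lemma sstep_G j t t' : sstep G j (trace_of j) t t' <-> stut_succ (agree j) t t'.
Proof.
have HG k : (exists d, lIn d (nth [::] G j) /\
              ~ (tsem (trace_of j) V0 d t <-> tsem (trace_of j) V0 d k)) <-> ~ agree j t k.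
  split=> [[d [Hd Hn]] Hagree|Hn]; first by apply/Hn/Hagree.
  by apply: NNPP => Hnex; apply: Hn => d Hd; apply: NNPP => Hc; apply: Hnex; exists d.
by split; apply: succ_min_ext => k; rewrite HG.
Qed.

Definition zerov : vec := fun _ => 0.

Lemma mstep_exists w : exists w', forall j, mstep (Delta ff G) j (trace_of j) (w j) (w' j).
Proof.
apply: (functional_choice (fun j => mstep (Delta ff G) j (trace_of j) (w j))) => j.
have [w' Hw'] := succ_min_exists (change (agree j)) (w j).
by exists w'; apply/mstep_Delta.
Qed.

Lemma sstep_exists t : exists t', forall j, sstep G j (trace_of j) (t j) (t' j).
Proof.
apply: (functional_choice (fun j => sstep G j (trace_of j) (t j))) => j.
have [t' Ht'] := succ_min_exists (fun k => ~ agree j (t j) k) (t j).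
by exists t'; apply/sstep_G.
Qed.

Lemma msem_MAnd W (p1 p2 : MF) v :
  msemM W (MAnd p1 p2) v <-> msemM W p1 v /\ msemM W p2 v.
Proof.
rewrite msem_not msem_or !msem_not.
by split=> [H|]; [split; apply: NNPP => Hn; apply: H|]; tauto.
Qed.

Section FixedLags.
Variable short : nat -> bool.

Definition lag_rel (w t : vec) := forall j, lagged (agree j) (short j) (w j) (t j).

Lemma lag_rel_fun w t t' : lag_rel w t -> lag_rel w t' -> t = t'.
Proof. by move=> H H'; apply: functional_extensionality => j; apply: lagged_fun (H j) (H' j). Qed.

Lemma lag_rel_exists w : exists t, lag_rel w t.
Proof.
by apply: (functional_choice (fun j => lagged (agree j) (short j) (w j))) => j; apply: lagged_exists.
Qed.

Lemma lag_rel_nonzero w t : lag_rel w t -> t <> zerov.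
Proof. by move=> H Et; have := lagged_pos (H 0); rewrite Et. Qed.

Lemma lag_rel_step w t w' t' : lag_rel w t ->
  (forall j, mstep (Delta ff G) j (trace_of j) (w j) (w' j)) ->
  (forall j, sstep G j (trace_of j) (t j) (t' j)) -> lag_rel w' t'.
Proof.
move=> H Hw Ht j; apply: (lagged_step (@agree_refl j) (@agree_sym j) (@agree_trans j) (H j)).
  exact/mstep_Delta.
exact/sstep_G.
Qed.

Lemma tsem_tshift j d w t : tclosed d -> lagged (agree j) (short j) w t ->
  tsem (trace_of j) V0 (tshift (short j) (Dchange ff G j) d) w <-> tsem (trace_of j) V0 d t.
Proof.
move=> dc; rewrite /lagged /tshift; case: (short j) => [->|[m [Hm ->]]]; first exact: tsem_nextg.
apply: tsem_tafter_next => //; first exact: (twf_Dchange j).1.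
by apply: succ_min_ext Hm => i; rewrite tsem_Dchange.
Qed.

Lemma msem_next_lag Wm Ws (p : MF) (q : SF) l w t :
  (forall j tr i i', sstep l j tr i i' <-> sstep G j tr i i') ->
  (forall w t, lag_rel w t -> (msemM Wm p w <-> msemS Ws q t)) ->
  lag_rel w t -> (msemM Wm (MNext (Delta ff G) p) w <-> msemS Ws (MNext l q) t).
Proof.
move=> Hl Hpq Hwt /=; split=> [[w' [Hw' Hp]]|[t' [Ht' Hq]]].
  have [t' Ht'] := sstep_exists t.
  exists t'; split=> [j|]; first exact/Hl.
  by rewrite -(Hpq w') //; apply: lag_rel_step Hwt Hw' Ht'.
have [w' Hw'] := mstep_exists w.
exists w'; split=> //; rewrite (Hpq w' t') //.
by apply: lag_rel_step Hwt Hw' _ => j; apply/Hl.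
Qed.

Lemma subst_rel_upd (R : vec -> vec -> Prop) s Wm Ws X (rho : MF) I S :
  var_or_closed s ->
  (forall Y w t, R w t -> (msemM Wm (s Y) w <-> Ws Y t)) ->
  (forall w t, R w t -> (msemM (upd Wm X I) rho w <-> S t)) ->
  forall Y w t, R w t -> (msemM (upd Wm X I) (upd s X rho Y) w <-> upd Ws X S Y t).
Proof.
move=> Hs HsW Hrho Y w t Rwt; rewrite /upd; case: eqP => [_|NYX]; first exact: Hrho.
by rewrite -/(upd Wm X I) msem_upd_notfree; [apply: HsW|apply: var_or_closed_notfree].
Qed.

Lemma trans_lag_correct psi : forall s Wm Ws,
  steps_as G psi -> mpos_closed psi -> var_or_closed s ->
  (forall X w t, lag_rel w t -> (msemM Wm (s X) w <-> Ws X t)) ->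
  forall w t, lag_rel w t -> (msemM Wm (trans_lag ff G short s psi) w <-> msemS Ws psi t).
Proof.
elim: psi => [d j|Y|p1 IH1 p2 IH2|p1 IH1|l p1 IH1|X p1 IH1] s Wm Ws Hst Hpc Hs HsW w t Hwt.
- exact: tsem_tshift.
- exact: HsW.
- have [Hst1 Hst2] := steps_as_or Hst; case: Hpc => Hpc1 Hpc2.
  by rewrite /= (IH1 s Wm Ws _ _ _ _ w t) ?(IH2 s Wm Ws _ _ _ _ w t).
- by rewrite /= (IH1 s Wm Ws _ _ _ _ w t).
- have [Hst1 Hl] := steps_as_next Hst.
  by apply: msem_next_lag => // w' t'; apply: IH1.
- case: Hpc => Hpol Hpc; set s' := upd s X (mvar X).
  have Hs' : var_or_closed s' by apply: var_or_closed_upd => //; left.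
  change (lfp (fun I => msemM (upd Wm X I) (trans_lag ff G short s' p1)) w <->
          lfp (fun S => msemS (upd Ws X S) p1) t).
  apply: (lfp_transfer lag_rel_fun lag_rel_exists) Hwt.
  + apply: msem_monotone; apply: mpol_trans_lag => //; first by rewrite /s' /upd eqxx.
    by move=> Y NYX; rewrite /s' /upd; case: eqP => // _; apply: var_or_closed_notfree.
  + exact: msem_monotone.
  + move=> I S HIS; apply: IH1 => //; apply: subst_rel_upd => // u v Huv.
    by rewrite /= /upd eqxx; apply: HIS.
Qed.

Hypothesis short_correct : forall j, short j <-> short_lag (agree j).

Lemma lag_rel_init t :
  (forall j, sstep G j (trace_of j) 0 (t j)) -> lag_rel zerov t.
Proof.
move=> Ht j; apply: (lagged_init (@agree_refl j) (@agree_sym j) (@agree_trans j)).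
  exact: short_correct.
exact/sstep_G.
Qed.

Lemma msem_next_init Wm Ws (p : MF) (q : SF) l :
  (forall j tr i i', sstep l j tr i i' <-> sstep G j tr i i') ->
  (forall w t, lag_rel w t -> (msemM Wm p w <-> msemS Ws q t)) ->
  msemM Wm p zerov <-> msemS Ws (MNext l q) zerov.
Proof.
move=> Hl Hpq /=; split=> [Hp|[t [Ht Hq]]].
  have [t Ht] := sstep_exists zerov.
  by exists t; split=> [j|]; [apply/Hl|rewrite -(Hpq _ _ (lag_rel_init Ht))].
have Ht' j : sstep G j (trace_of j) 0 (t j) by apply/Hl.
by rewrite (Hpq _ _ (lag_rel_init Ht')).
Qed.

Lemma trans_init_correct psi : forall s Wm Ws,
  steps_as G psi -> mpos_closed psi -> var_or_closed s ->
  (forall Y, mfree Y psi -> mclosed (s Y)) ->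
  (forall X w t, lag_rel w t -> (msemM Wm (s X) w <-> Ws X t)) ->
  (forall X, Wm X zerov <-> Ws X zerov) ->
  msemM Wm (trans_init ff G short s psi) zerov <-> msemS Ws psi zerov.
Proof.
elim: psi => [d j|Y|p1 IH1 p2 IH2|p1 IH1|l p1 IH1|X p1 IH1] s Wm Ws Hst Hpc Hs Hfree HsW H0.
- by [].
- exact: H0.
- have [Hst1 Hst2] := steps_as_or Hst; case: Hpc => Hpc1 Hpc2.
  by rewrite /= (IH1 s Wm Ws) ?(IH2 s Wm Ws) // => Y HY; apply: Hfree; [right|left].
- by rewrite /= (IH1 s Wm Ws).
- have [Hst1 Hl] := steps_as_next Hst.
  by apply: msem_next_init => // w t; apply: trans_lag_correct.
- case: Hpc => Hpol Hpc; set rho := trans_lag ff G short s (MMu X p1).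
  have rho_closed : mclosed rho.
    by move=> Z /mfree_trans_lag [Y [HY]]; apply: Hfree.
  have Hrho W w t : lag_rel w t -> (msemM W rho w <-> msemS Ws (MMu X p1) t).
    move=> Hwt; rewrite (msem_closed _ _ _ Wm) //.
    exact: (trans_lag_correct (psi := MMu X p1)) Hwt.
  set s' := upd s X rho.
  have Hs' : var_or_closed s' by apply: var_or_closed_upd => //; right.
  change (lfp (fun I => msemM (upd Wm X I) (trans_init ff G short s' p1)) zerov <->
          lfp (fun S => msemS (upd Ws X S) p1) zerov).
  apply: lfp_transfer_at; [|exact: msem_monotone|move=> I S HS HIS; apply: IH1 => //].
  + apply/msem_monotone/mpol_trans_init => // Y.
    rewrite /s' /upd; case: eqP => [_|NYX]; first exact: rho_closed.
    exact: var_or_closed_notfree.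
  + move=> Y HY; rewrite /s' /upd; case: eqP => // NYX.
    by apply: Hfree; split=> // EXY; apply: NYX.
  + apply: subst_rel_upd => // w t Hwt; rewrite Hrho //; symmetry.
    exact: (HS t (lag_rel_nonzero Hwt)).
  + by move=> Y; rewrite /upd; case: eqP.
Qed.
End FixedLags.

Lemma msem_guess_lags_S W n short psi :
  msemM W (guess_lags ff G n.+1 short psi) zerov <->
  short_lag (agree n) /\ msemM W (guess_lags ff G n (upd short n true) psi) zerov \/
  ~ short_lag (agree n) /\ msemM W (guess_lags ff G n (upd short n false) psi) zerov.
Proof.
rewrite [guess_lags _ _ _.+1 _ _]/= msem_or !msem_MAnd msem_not.
by rewrite msem_test -/(trace_of n) tsem_short_lag_Dchange.
Qed.

Lemma msem_guess_lags W (psi : SF) (short_star : nat -> bool) :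
  (forall j, short_star j <-> short_lag (agree j)) ->
  forall n (short : nat -> bool), (forall j, n <= j -> short j = short_star j) ->
  msemM W (guess_lags ff G n short psi) zerov <->
  msemM W (trans_init ff G short_star mvar psi) zerov.
Proof.
move=> Hstar; elim=> [|n IH] short Hshort.
  by have -> : short = short_star by apply: functional_extensionality => j; apply: Hshort.
have Hupd b : short_star n = b -> forall j, n <= j -> upd short n b j = short_star j.
  by move=> <- j Hj; rewrite /upd; case: eqP => [->//|Njn]; apply: Hshort; lia.
rewrite msem_guess_lags_S -Hstar; case E : (short_star n).
  by rewrite (IH _ (Hupd true E)); split=> [[[_ H]|[]]|H] //; left.
by rewrite (IH _ (Hupd false E)); split=> [[[]|[_ H]]|H] //; right.
Qed.

Lemma guess_lags_correct k psi :
  size G <= k -> steps_as G psi -> mpos_closed psi -> mclosed psi ->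
  msemM W0 (guess_lags ff G k (fun _ => true) psi) zerov <-> msemS W0 psi zerov.
Proof.
move=> HGk Hst Hpc Hc.
have [short Hshort] : exists short : nat -> bool, forall j, short j <-> short_lag (agree j).
  apply: (functional_choice (fun j (b : bool) => b <-> short_lag (agree j))) => j.
  by case: (classic (short_lag (agree j))) => H; [exists true|exists false].
have Hk j : k <= j -> (fun _ => true) j = short j.
  move=> Hkj; have : short_lag (agree j) by right=> i; apply=> d; rewrite nth_default //; lia.
  by move/Hshort => ->.
rewrite (msem_guess_lags _ _ Hshort Hk).
by apply: (trans_init_correct Hshort) => // [X|Y /Hc]; [left|].
Qed.
End Correctness.

Section TranslationWf.
Variables (AP : finType) (B : tform AP -> Prop) (ff : tform AP) (G : slabel AP) (k : nat).
Hypothesis B_closed : basis_closed B.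
Hypothesis B_ff : B ff.
Hypothesis ff_wf : twf ff.
Hypothesis G_wf : slwf k G.
Hypothesis G_basis : slbasis B G.
Notation MF := (mform AP (mlabel AP)).
Notation SF := (mform AP (slabel AP)).
Notation mvar := (MVar AP (mlabel AP)).
Implicit Types (short : nat -> bool) (s : nat -> MF) (psi : SF).

Definition target_formula (phi : MF) : Prop :=
  [/\ mwf (@mlwf AP) k phi, mbasis (@mlbasis AP) B phi &
      forall l, lIn l (mlabels phi) -> l = Delta ff G].

Lemma lIn_nth_G j d : lIn d (nth [::] G j) -> exists g, lIn g G /\ lIn d g.
Proof.
case: (ltnP j (size G)) => [Hj|Hj]; last by rewrite nth_default.
by exists (nth [::] G j); split=> //; apply: lIn_nth.
Qed.

Lemma basis_Dchange j : B (Dchange ff G j).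
Proof. by apply: basis_tchange_any => // d /lIn_nth_G [g [Hg Hd]]; apply: G_basis Hg Hd. Qed.

Lemma mlwf_Delta : mlwf k (Delta ff G).
Proof.
split; first by rewrite size_map; case: G_wf.
move=> d Hd; have [g [Hg ->]] := lIn_map Hd; apply: twf_tchange_any => // d' Hd'.
exact: G_wf.2 Hg Hd'.
Qed.

Lemma mlbasis_Delta : mlbasis B (Delta ff G).
Proof.
move=> d Hd; have [g [Hg ->]] := lIn_map Hd; apply: basis_tchange_any => // d' Hd'.
exact: G_basis Hg Hd'.
Qed.

Lemma target_trans_lag short psi : forall s,
  mwf (@slwf AP) k psi -> mbasis (@slbasis AP) B psi -> var_or_closed s ->
  (forall X, target_formula (s X)) -> target_formula (trans_lag ff G short s psi).
Proof.
elim: psi => [d j|Y|p1 IH1 p2 IH2|p1 IH1|l p1 IH1|X p1 IH1] s /= Hwf Hb Hs Htarget.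
- case: Hwf => Hj [Cd Pd]; split=> //.
    by split=> //; apply: twf_tshift => //; apply: (twf_Dchange ff_wf G_wf.2).
  apply: basis_tshift => //; [exact: basis_Dchange|exact: (twf_Dchange ff_wf G_wf.2 j).1].
- exact: Htarget.
- case: Hwf => W1 W2; case: Hb => B1 B2.
  case: (IH1 s W1 B1 Hs Htarget) => T1 T1' T1''; case: (IH2 s W2 B2 Hs Htarget) => T2 T2' T2''.
  by split=> // l; rewrite lIn_cat => -[/T1''|/T2''].
- exact: IH1.
- case: Hwf => _ W1; case: Hb => _ B1; case: (IH1 s W1 B1 Hs Htarget) => T1 T1' T1''.
  split; [split=> //; apply: mlwf_Delta|split=> //; apply: mlbasis_Delta|].
  by move=> l' [<-|/T1''].
- case: Hwf => Hpol W1.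
  have Hs' : var_or_closed (upd s X (mvar X)) by apply: var_or_closed_upd => //; left.
  have Htarget' Y : target_formula (upd s X (mvar X) Y).
    by rewrite /upd; case: eqP => _ //; apply: Htarget.
  case: (IH1 _ W1 Hb Hs' Htarget') => T1 T1' T1''; split=> //; split=> //.
  apply: mpol_trans_lag => //; first by rewrite /upd eqxx.
  by move=> Y NYX; rewrite /upd; case: eqP => // _; apply: var_or_closed_notfree.
Qed.

Lemma target_trans_init short psi : forall s,
  mwf (@slwf AP) k psi -> mbasis (@slbasis AP) B psi -> var_or_closed s ->
  (forall Y, mfree Y psi -> mclosed (s Y)) ->
  (forall X, target_formula (s X)) -> target_formula (trans_init ff G short s psi).
Proof.
elim: psi => [d j|Y|p1 IH1 p2 IH2|p1 IH1|l p1 IH1|X p1 IH1] s /= Hwf Hb Hs Hfree Htarget.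
- by [].
- by [].
- case: Hwf => W1 W2; case: Hb => B1 B2.
  case: (IH1 s W1 B1 Hs) => // [Y HY|T1 T1' T1'']; first by apply: Hfree; left.
  case: (IH2 s W2 B2 Hs) => // [Y HY|T2 T2' T2'']; first by apply: Hfree; right.
  by split=> // l; rewrite lIn_cat => -[/T1''|/T2''].
- exact: IH1.
- by case: Hwf => _ W1; case: Hb => _ B1; apply: target_trans_lag.
- case: Hwf => Hpol W1; set rho := trans_lag ff G short s (MMu X p1).
  have rho_closed : mclosed rho by move=> Z /mfree_trans_lag [Y [HY]]; apply: Hfree.
  have Hs' : var_or_closed (upd s X rho) by apply: var_or_closed_upd => //; right.
  have Hfree' Y : mfree Y p1 -> mclosed (upd s X rho Y).
    by rewrite /upd; case: eqP => // NYX HY; apply: Hfree; split=> // EXY; apply: NYX.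
  have Htarget' Y : target_formula (upd s X rho Y).
    rewrite /upd; case: eqP => _; last exact: Htarget.
    by apply: (@target_trans_lag short (MMu X p1)).
  case: (IH1 _ W1 Hb Hs' Hfree' Htarget') => T1 T1' T1''; split=> //; split=> //.
  apply: mpol_trans_init => // Y; rewrite /upd; case: eqP => [_|NYX]; first exact: rho_closed.
  exact: var_or_closed_notfree.
Qed.

Lemma target_guess_lags psi :
  mwf (@slwf AP) k psi -> mbasis (@slbasis AP) B psi -> mclosed psi ->
  forall n short, n <= k -> target_formula (guess_lags ff G n short psi).
Proof.
move=> Hwf Hb Hc; elim=> [|n IH] short Hn /=.
  by apply: target_trans_init => // [X|Y /Hc]; [left|].
have Htest : target_formula (MTest _ (tshort_lag (Dchange ff G n)) n).
  split=> //; first by split; [lia|apply/twf_tshort_lag/(twf_Dchange ff_wf G_wf.2)].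
  by apply: basis_tshort_lag => //; [apply: basis_Dchange|apply: (twf_Dchange ff_wf G_wf.2 n).1].
case: Htest => [Tt Tt' _].
case: (IH (upd short n true)) => [|T1 T1' T1'']; first lia.
case: (IH (upd short n false)) => [|T2 T2' T2'']; first lia.
split; [by rewrite /=; tauto|by rewrite /=; tauto|].
by move=> l; rewrite /= !lIn_cat => -[/T1''|/T2''].
Qed.

Lemma mclosed_guess_lags psi n short : mclosed psi -> mclosed (guess_lags ff G n short psi).
Proof.
move=> Hc; elim: n short => [|n IH] short X /=.
  by case/mfree_trans_init => [/Hc|[Y [/Hc]]].
by move: (IH (upd short n true) X) (IH (upd short n false) X); tauto.
Qed.
End TranslationWf.

Section QuantifierPrefix.
Variable AP : finType.

Fixpoint hmap L1 L2 (f : mform AP L1 -> mform AP L2) (phi : hform AP L1) : hform AP L2 :=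
  match phi with
  | HEx p => HEx (hmap f p)
  | HAll p => HAll (hmap f p)
  | HBody psi => HBody (f psi)
  end.

Fixpoint hdepth L (phi : hform AP L) : nat :=
  match phi with HEx p | HAll p => (hdepth p).+1 | HBody _ => 0 end.

Lemma hbody_hmap L1 L2 (f : mform AP L1 -> mform AP L2) phi :
  hbody (hmap f phi) = f (hbody phi).
Proof. by elim: phi. Qed.

Lemma hdepth_hmap L1 L2 (f : mform AP L1 -> mform AP L2) phi :
  hdepth (hmap f phi) = hdepth phi.
Proof. by elim: phi => //= p ->. Qed.

Lemma hwfE L lwf (phi : hform AP L) n :
  hwf lwf n phi <-> mwf lwf (n + hdepth phi) (hbody phi) /\ mclosed (hbody phi).
Proof. by elim: phi n => [p IH|p IH|psi] n /=; rewrite ?IH ?addSnnS ?addn0. Qed.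

Lemma hsat_hmap L1 L2 step1 step2 (f : mform AP L1 -> mform AP L2) phi T :
  (forall Pi, msem step1 Pi W0 (hbody phi) zerov <-> msem step2 Pi W0 (f (hbody phi)) zerov) ->
  forall Pi, hsat step1 T Pi phi <-> hsat step2 T Pi (hmap f phi).
Proof.
elim: phi => [p IH|p IH|psi] Hbody Pi /=; last exact: Hbody.
  by split=> -[tr [Ttr Hp]]; exists tr; split=> //; move: Hp; rewrite IH.
by split=> Hp tr Ttr; move: (Hp tr Ttr); rewrite IH.
Qed.
End QuantifierPrefix.

Lemma mwf_labels (AP : finType) L lwf k (psi : mform AP L) l :
  mwf lwf k psi -> lIn l (mlabels psi) -> lwf k l.
Proof.
elim: psi => [d j|Y|p1 IH1 p2 IH2|p1 IH1|l' p1 IH1|X p1 IH1] //=.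
- by case=> /IH1 H1 /IH2 H2; rewrite lIn_cat => -[/H1|/H2].
- by case=> Hl' /IH1 H1 [<-|/H1].
- by case=> _ /IH1.
Qed.

Lemma mbasis_labels (AP : finType) L lbasis B (psi : mform AP L) l :
  mbasis lbasis B psi -> lIn l (mlabels psi) -> lbasis B l.
Proof.
elim: psi => [d j|Y|p1 IH1 p2 IH2|p1 IH1|l' p1 IH1|X p1 IH1] //=.
- by case=> /IH1 H1 /IH2 H2; rewrite lIn_cat => -[/H1|/H2].
- by case=> Hl' /IH1 H1 [<-|/H1].
Qed.

Lemma stuttering_label_exists (AP : finType) (B : tform AP -> Prop) phi :
  stuttering_unique_formula B phi ->
  exists G, [/\ slwf (hdepth phi) G, slbasis B G & steps_as G (hbody phi)].
Proof.
move=> [Hwf [Huniq Hb]]; have [Hmwf _] := iffLR (hwfE _ _ _) Hwf.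
case E : (mlabels (hbody phi)) => [|G0 rest].
  exists (nseq (hdepth phi) [::]); split=> [||l]; last by rewrite E.
    by split=> [|g d Hg]; rewrite ?size_nseq ?(lIn_nseq Hg).
  by move=> g d Hg; rewrite (lIn_nseq Hg).
have HG0 : lIn G0 (mlabels (hbody phi)) by rewrite E; left.
exists G0; split; [exact: mwf_labels Hmwf HG0|exact: mbasis_labels Hb HG0|].
move=> l Hl j tr i i'; have [_ Hset] := Huniq l G0 Hl HG0.
by split; apply: succ_min_ext => m; split=> -[d [Hd Hn]]; exists d; split=> //; apply/Hset.
Qed.

Lemma mumb_at_least_stut_of_false (AP : finType) (B : tform AP -> Prop) (ff : tform AP) :
  basis_closed B -> B ff -> twf ff -> (forall tr i, ~ tsem tr V0 ff i) ->
  mumb_at_least_stut B B.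
Proof.
move=> HB Bff ff_wf ff_false phi Hphi; have [Hwf [_ Hb]] := Hphi.
have [Hmwf Hc] := iffLR (hwfE _ _ _) Hwf; rewrite add0n in Hmwf.
have [G [Gwf Gb Gst]] := stuttering_label_exists Hphi.
set k := hdepth phi; set psi' := guess_lags ff G k (fun _ => true) (hbody phi).
have [T1 T2 T3] := target_guess_lags HB Bff ff_wf Gwf Gb Hmwf Hb Hc (fun _ => true) (leqnn k).
exists (hmap (fun _ => psi') phi); split.
  rewrite /mumbling_unique_formula /unique_mumbling hwfE hdepth_hmap !hbody_hmap add0n.
  by split; [split=> //; apply: mclosed_guess_lags Hc|split=> // D1 D2 /T3 -> /T3 ->].
move=> T; apply: hsat_hmap => Pi; symmetry.
apply: guess_lags_correct => //; [exact: Gwf.2|by case: Gwf => ->|exact: mwf_mpos_closed Hmwf].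
Qed.

Lemma sstep_no_basis (AP : finType) (B : tform AP -> Prop) (G : slabel AP) j tr i i' :
  (forall d, ~ B d) -> slbasis B G -> sstep G j tr i i' <-> i' = i.+1.
Proof.
move=> noB HG.
have Hnone k : ~ exists d, lIn d (nth [::] G j) /\ ~ (tsem tr V0 d i <-> tsem tr V0 d k).
  move=> [d [Hd _]]; case: (ltnP j (size G)) => Hj; last by rewrite nth_default in Hd.
  exact: noB (HG _ _ (lIn_nth [::] Hj) Hd).
split=> [[[_ [/Hnone]]|[_ ->]] //|->].
by right; split=> // k _ /Hnone.
Qed.

Lemma msem_sstep_no_basis (AP : finType) (B : tform AP -> Prop) (psi : mform AP (slabel AP)) :
  (forall d, ~ B d) -> mbasis (@slbasis AP) B psi ->
  forall W Pi Pi' v, msem (@sstep AP) Pi W psi v <-> msem (@sstep AP) Pi' W psi v.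
Proof.
move=> noB; elim: psi => [d j|Y|p1 IH1 p2 IH2|p1 IH1|l p1 IH1|X p1 IH1] /= Hb W Pi Pi' v.
- by case: (noB d).
- by [].
- by case: Hb => B1 B2; rewrite (IH1 B1 W Pi Pi') (IH2 B2 W Pi Pi').
- by rewrite (IH1 Hb W Pi Pi').
- case: Hb => Hl B1.
  have Hstep tr j i i' : sstep l j tr i i' <-> i' = i.+1 by apply: sstep_no_basis Hl.
  have IH u := IH1 B1 W Pi Pi' u.
  split=> -[w [Hw Hp]]; exists w; split; try by move=> j; apply/Hstep; move/Hstep: (Hw j).
  - by rewrite -IH.
  - by rewrite IH.
- by split=> Hmu I HI; apply: Hmu => u Hu; apply: HI; move: Hu; rewrite (IH1 Hb _ Pi Pi').
Qed.

Definition mconst (AP : finType) (b : bool) : mform AP (mlabel AP) :=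
  let mfalse := MMu 0 (MVar AP (mlabel AP) 0) in if b then MNot mfalse else mfalse.

Lemma msem_mconst (AP : finType) step Pi W v b : msem step Pi W (mconst AP b) v <-> b.
Proof.
have Hfalse : ~ msem step Pi W (MMu 0 (MVar AP (mlabel AP) 0)) v.
  by move=> /(_ (fun _ => False)); apply=> u; rewrite /= /upd eqxx.
by case: b => /=; split.
Qed.

Lemma mumb_at_least_stut_no_basis (AP : finType) (B1 B2 : tform AP -> Prop) :
  (forall d, ~ B2 d) -> mumb_at_least_stut B1 B2.
Proof.
move=> noB phi [_ [_ Hb]].
have [b Hbc] : exists b : bool, b <-> msem (@sstep AP) [::] W0 (hbody phi) zerov.
  by case: (classic (msem (@sstep AP) [::] W0 (hbody phi) zerov)); [exists true|exists false].
exists (hmap (fun _ => mconst AP b) phi); split.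
  rewrite /mumbling_unique_formula /unique_mumbling hwfE !hbody_hmap.
  have Hc : mclosed (mconst AP b) by case: b {Hbc} => X /= [].
  by case: b {Hbc} Hc; split=> //; split.
move=> T; apply: hsat_hmap => Pi; rewrite msem_mconst Hbc.
exact: msem_sstep_no_basis.
Qed.

Lemma no_LTL_of_empty (AP : finType) : (AP -> False) -> forall d : tform AP, ~ isLTL d.
Proof. by move=> noAP d; elim. Qed.

Lemma basis_closed_LTL (AP : finType) : basis_closed (@isLTL AP).
Proof. by split=> *; constructor. Qed.

Unset Implicit Arguments.
Theorem lemma6p2 (AP : finType) :
  mumb_at_least_stut (@isLTL AP) (@isLTL AP) /\
  mumb_at_least_stut (fun _ : tform AP => True) (fun _ : tform AP => True).
Proof.
split.
  case: (pickP (fun _ : AP => true)) => [a _|noAP]; last first.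
    by apply/mumb_at_least_stut_no_basis/no_LTL_of_empty => a; have := noAP a.
  pose ff := TNot (TOr (TAp a) (TNot (TAp a))).
  apply: (@mumb_at_least_stut_of_false _ _ ff).
  - exact: basis_closed_LTL.
  - by do !constructor.
  - by split=> // Y /= [].
  - by move=> tr i /=; tauto.
apply: (@mumb_at_least_stut_of_false _ _ (TMu 0 (TVar AP 0))) => //.
- by split=> // Y /= [].
- by move=> tr i /(_ (fun _ => False)); apply=> k; rewrite /= /upd eqxx.
Qed.
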